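(* Let $G=(G^0,G^1,r,s)$ be a topological graph in which $G^0$ and $G^1$ are compact Hausdorff spaces and $r,s:G^1\to G^0$ are surjective local homeomorphisms. For $m,n\in\mathbb{N}$ let $G^1_{m,n}:=\{e\in G^1:|r(e)G^1|=m\text{ and }|G^1s(e)|=n\}$. Then the sets $G^1_{m,n}$ are compact open, as are $s(G^1_{m,n})$ and $r(G^1_{m,n})$.
   Context: For $v\in G^0$, $G^1v:=s^{-1}(v)$ and $vG^1:=r^{-1}(v)$; $|\cdot|$ denotes cardinality. *)

From HB Require Import structures.
From mathcomp Require Import all_boot all_order all_algebra.
From mathcomp Require Import all_classical all_reals all_analysis.
Set Implicit Arguments. Unset Strict Implicit. Unset Printing Implicit Defensive.
Import Order.TTheory GRing.Theory Num.Theory.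
Local Open Scope classical_set_scope.

(* f : X -> Y is a local homeomorphism: f is continuous and every point has an
   open neighbourhood U such that f(U) is open and f restricted to U is a
   homeomorphism onto f(U) (injective on U, and open on open subsets of U). *)
Definition local_homeo (X Y : topologicalType) (f : X -> Y) : Prop :=
  continuous f /\
  forall x : X, exists U : set X,
    [/\ open U, U x, open (f @` U), {in U &, injective f} &
        forall V : set X, open V -> V `<=` U -> open (f @` V)].

(* G^1_{m,n} = {e : |r(e)G^1| = m and |G^1 s(e)| = n}, with
   vG^1 = r^{-1}(v) and G^1 v = s^{-1}(v). *)
Definition edges_mn (E V : Type) (r s : E -> V) (m n : nat) : set E :=
  [set e | (card_eq (r @^-1` [set r e]) `I_m) /\
           (card_eq (s @^-1` [set s e]) `I_n)].

From HB Require Import structures.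
From mathcomp Require Import all_boot all_order all_algebra.
From mathcomp Require Import all_classical all_reals all_analysis finmap.
Set Implicit Arguments.
Unset Strict Implicit.
Unset Printing Implicit Defensive.
Local Open Scope classical_set_scope.

(* The number of preimages of a point under a local homeomorphism f from a
   compact Hausdorff space to a Hausdorff space is locally constant: the fibre
   over v is finite, its points have pairwise disjoint charts, and near v every
   point has exactly one preimage in each chart and none outside them.  Hence
   each level set {v : |f^-1(v)| = m} is clopen, so G^1_{m,n}, an intersection
   of preimages of two such sets, is clopen in the compact space G^1; its
   images are compact by continuity and open because local homeomorphisms are
   open maps. *)

(* [compact_cover] is only stated for pointed spaces. *)
Definition pointed_at (X : topologicalType) (x0 : X) : Type := X.
HB.instance Definition _ (X : topologicalType) (x0 : X) :=
  Topological.copy (@pointed_at X x0) X.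
HB.instance Definition _ (X : topologicalType) (x0 : X) :=
  isPointed.Build (@pointed_at X x0) x0.

Lemma compact_setT_cover_compact (X : topologicalType) :
  compact [set: X] -> cover_compact [set: X].
Proof.
have [[x0 _]|X0] := pselect (exists x : X, True); last first.
  move=> _ I D F _ _; exists fset0 => // x; by case: X0; exists x.
move=> cX; have : compact [set: @pointed_at X x0] := cX.
by rewrite compact_cover.
Qed.

Lemma hausdorff_separate_point_seq (T : topologicalType) (a : T) (l : seq T) :
  hausdorff_space T -> a \notin l ->
  exists A B : set T, [/\ open A, open B, A a, {in l, forall y, B y} &
                          A `&` B = set0].
Proof.
move=> hT; elim: l => [|b l IH].
  by exists setT, set0; split => //; [exact: openT|exact: open0|rewrite setI0].
rewrite in_cons negb_or => /andP[ab al].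
move: hT; rewrite open_hausdorff => /(_ a b ab) [[A1 B1] /= [aA1 bB1]].
case=> oA1 oB1 /eqP A1B1; have [A2 [B2 [oA2 oB2 aA2 lB2 A2B2]]] := IH al.
exists (A1 `&` A2), (B1 `|` B2); split; [exact: openI|exact: openU| | |].
- by split => //; rewrite -in_setE.
- move=> y; rewrite in_cons => /orP[/eqP ->|yl]; last by right; apply: lB2.
  by left; rewrite -in_setE.
- rewrite setIUr setU_eq0; split.
    by rewrite setIAC A1B1 set0I.
  by rewrite -setIA A2B2 setI0.
Qed.

Lemma hausdorff_disjoint_open_refinement (T : topologicalType)
    (V : T -> set T) (s : seq T) :
  hausdorff_space T -> (forall x, open (V x) /\ V x x) ->
  exists U : T -> set T,
    (forall x, x \in s -> [/\ open (U x), U x x & U x `<=` V x]) /\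
    (forall x y z, x \in s -> y \in s -> U x z -> U y z -> x = y).
Proof.
move=> hT oV; elim: s => [|a l [U [oU dU]]]; first by exists V.
have [al|al] := boolP (a \in l).
  exists U; split=> [x|x y z]; rewrite !in_cons.
    by move=> /predU1P[->|]; apply: oU.
  by move=> /predU1P[->|xl] /predU1P[->|yl]; apply: dU.
have [A [B [oA oB Aa lB AB]]] := hausdorff_separate_point_seq hT al.
have notA x : x \in l -> x != a by move=> xl; apply: contraNneq al => <-.
exists (fun x => if x == a then V a `&` A else U x `&` B); split.
  move=> x; rewrite in_cons => /predU1P[->|xl].
    rewrite eqxx; split; [exact: openI (oV a).1 oA| |exact: subIsetl].
    by split=> //; exact: (oV a).2.
  rewrite (negbTE (notA x xl)); have [oUx Uxx UxV] := oU x xl.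
  by split; [exact: openI|split=> //; apply: lB|move=> z [/UxV]].
have AB0 z : A z -> B z -> False by move=> Az Bz; rewrite -[False]/(set0 z) -AB.
move=> x y z; rewrite !in_cons => /predU1P[->|xl] /predU1P[->|yl] //.
- by rewrite eqxx (negbTE (notA y yl)) => -[_ Az] [_ /(AB0 z Az)].
- by rewrite eqxx (negbTE (notA x xl)) => -[_ Bz] [_ /AB0 /(_ Bz)].
- rewrite (negbTE (notA x xl)) (negbTE (notA y yl)) => -[Uxz _] [Uyz _].
  exact: dU Uxz Uyz.
Qed.

Lemma fiber_card_eq_of_disjoint_charts (X Y : Type) (f : X -> Y)
    (U : X -> set X) (v w : Y) :
  (forall x, f x = v -> {in U x &, injective f} /\ (f @` U x) w) ->
  (forall x y z, f x = v -> f y = v -> U x z -> U y z -> x = y) ->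
  f @^-1` [set w] `<=` \bigcup_(x in f @^-1` [set v]) U x ->
  (f @^-1` [set w] #= f @^-1` [set v])%card.
Proof.
move=> chart disjU coverU.
have /choice[g Hg] x : exists e, f x = v -> U x e /\ f e = w.
  have [fxv|] := pselect (f x = v); last by exists x.
  by have [_ [e Ue fe]] := chart x fxv; exists e.
have g_bij : set_bij (f @^-1` [set v]) (f @^-1` [set w]) g.
  split.
  - by move=> x /Hg[].
  - move=> x y; rewrite !in_setE => fx fy gxy.
    apply: (disjU x y (g x) fx fy (Hg x fx).1).
    by rewrite gxy; apply: (Hg y fy).1.
  - move=> e fe; have [x fx Ue] := coverU e fe; exists x => //.
    have [injU _] := chart x fx; have [Ugx fgx] := Hg x fx.
    by apply: injU; rewrite ?in_setE // fgx fe.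
by rewrite card_eq_sym; exact: pcard_eq g_bij.
Qed.

(* Points near v have no preimage in the compact set ~` O, whose image under f
   is closed. *)
Lemma near_fiber_sub_open (X Y : topologicalType) (f : X -> Y) (v : Y)
    (O : set X) :
  continuous f -> compact [set: X] -> hausdorff_space Y ->
  open O -> f @^-1` [set v] `<=` O -> \forall w \near v, f @^-1` [set w] `<=` O.
Proof.
move=> cf cX hY oO vO; have cfO : closed (f @` ~` O).
  apply: compact_closed hY _; apply: continuous_compact.
    exact: continuous_subspaceT.
  by apply: subclosed_compact cX _ => //; rewrite closedC.
have : nbhs v (~` (f @` ~` O)).
  apply: open_nbhs_nbhs; split; first by rewrite openC.
  by move=> [e nOe /vO].
by apply: filterS => w nOw e fe; apply: contra_notP nOw => nOe; exists e.
Qed.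

Section LocalHomeomorphism.
Variables (X Y : topologicalType) (f : X -> Y).
Hypothesis f_lh : local_homeo f.

Lemma local_homeo_open_map (O : set X) : open O -> open (f @` O).
Proof.
move=> oO; have [Uf HU] := choice f_lh.2.
have -> : f @` O = \bigcup_(x in O) f @` (O `&` Uf x).
  apply/seteqP; split => [y [x Ox <-]|y [x _ [z [Oz _] <-]]]; last by exists z.
  by exists x => //; exists x => //; split => //; have [] := HU x.
apply: bigcup_open => x _; have [oUx _ _ _ oimg] := HU x.
by apply: oimg; [exact: openI|exact: subIsetr].
Qed.

Hypothesis cX : compact [set: X].

Lemma local_homeo_fiber_finite (v : Y) : finite_set (f @^-1` [set v]).
Proof.
have [Uf HU] := choice f_lh.2.
have [D _ coverD] : finite_subset_cover [set: X] Uf [set: X].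
  apply: compact_setT_cover_compact => // x _; first by have [] := HU x.
  by exists x => //; have [] := HU x.
set F := f @^-1` [set v].
apply: (@sub_finite_set _ _ (\bigcup_(i in [set` D]) (Uf i `&` F))).
  by move=> x fx; have [i Di Uix] := coverD x I; exists i.
apply: bigcup_finite; first exact: finite_fset.
move=> i _; have [/eqP->|/set0P[x [Uix fx]]] := boolP (Uf i `&` F == set0).
  exact: finite_set0.
apply: (@sub_finite_set _ _ [set x]); last exact: finite_set1.
have [_ _ _ injU _] := HU i.
by move=> y [Uiy fy]; apply: injU; rewrite ?in_setE //= fy fx.
Qed.

Hypotheses (hX : hausdorff_space X) (hY : hausdorff_space Y).

Lemma local_homeo_fiber_card_near (v : Y) :
  \forall w \near v, (f @^-1` [set w] #= f @^-1` [set v])%card.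
Proof.
have [Uf HU] := choice f_lh.2.
have finF := local_homeo_fiber_finite v.
set D := fset_set (f @^-1` [set v]).
have inD x : x \in D <-> f x = v by rewrite in_fset_set // in_setE.
have oUf x : open (Uf x) /\ Uf x x by have [] := HU x.
have [U [chartU disjU]] :=
  hausdorff_disjoint_open_refinement (D : seq X) hX oUf.
have near_imU : \forall w \near v, forall x, x \in D -> (f @` U x) w.
  have : nbhs v (\bigcap_(x in [set` D]) f @` U x).
    apply: filter_bigI => x xD; have [oUx Uxx UxUf] := chartU x xD.
    have [_ _ _ _ oimg] := HU x.
    apply: open_nbhs_nbhs; split; first exact: oimg oUx UxUf.
    by exists x => //; apply/inD.
  by apply: filterS => w imUw x xD; apply: imUw.
have near_coverU :
    \forall w \near v, f @^-1` [set w] `<=` \bigcup_(x in [set` D]) U x.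
  apply: near_fiber_sub_open f_lh.1 cX hY _ _.
    by apply: bigcup_open => x xD; have [] := chartU x xD.
  move=> x fx; have xD : x \in D by apply/inD.
  by exists x => //; have [] := chartU x xD.
apply: filterS2 near_imU near_coverU => w imUw coverUw.
apply: (@fiber_card_eq_of_disjoint_charts X Y f U v w).
- move=> x /inD fx; split; last exact: imUw.
  have [_ _ UV] := chartU x fx; have [_ _ _ injU _] := HU x.
  move=> a b; rewrite !in_setE => Ua Ub.
  by apply: injU; rewrite in_setE; apply: UV.
- by move=> x y z /inD xD /inD yD; apply: disjU.
- by move=> e /coverUw[x xD Ue]; exists x => //; apply/inD.
Qed.

Lemma local_homeo_fiber_card_clopen (m : nat) :
  clopen [set v | (f @^-1` [set v] #= `I_m)%card].
Proof.
split; last rewrite -openC; rewrite openE => v /= Hv; rewrite /interior;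
  apply: filterS (local_homeo_fiber_card_near v) => w /= Hw.
  exact: card_eq_trans Hw Hv.
by apply: contra_not Hv; apply: card_eq_trans; rewrite card_eq_sym.
Qed.

End LocalHomeomorphism.

Theorem mainTheorem10 (G0 G1 : topologicalType) (r s : G1 -> G0)
  (hG0c : compact [set: G0]) (hG0h : hausdorff_space G0)
  (hG1c : compact [set: G1]) (hG1h : hausdorff_space G1)
  (hr : local_homeo r) (hs : local_homeo s)
  (hrsurj : forall v : G0, exists e : G1, r e = v)
  (hssurj : forall v : G0, exists e : G1, s e = v) :
  forall m n : nat,
    (compact (edges_mn r s m n) /\ open (edges_mn r s m n)) /\
    (compact (s @` edges_mn r s m n) /\ open (s @` edges_mn r s m n)) /\
    (compact (r @` edges_mn r s m n) /\ open (r @` edges_mn r s m n)).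
Proof.
move=> m n.
have level_clopen (f : G1 -> G0) k : local_homeo f ->
    clopen (f @^-1` [set v | (f @^-1` [set v] #= `I_k)%card]).
  move=> hf; apply: preimage_clopen hf.1.
  exact: local_homeo_fiber_card_clopen hf hG1c hG1h hG0h k.
have [oE cE] : clopen (edges_mn r s m n) by apply: clopenI; apply: level_clopen.
have kE : compact (edges_mn r s m n) by exact: subclosed_compact cE hG1c _.
have image_compact (f : G1 -> G0) :
    local_homeo f -> compact (f @` edges_mn r s m n).
  by move=> hf; apply: continuous_compact kE; apply/continuous_subspaceT/hf.1.
split; [by []|split; split].
- exact: image_compact.
- exact: local_homeo_open_map.
- exact: image_compact.
- exact: local_homeo_open_map.
Qed.
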